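(* Let $\mathscr{A}$ be a strict monoidal category and $\mathscr{B}$ a strict braided monoidal category with braiding $c$. Let $\mathrm{Frob}(\mathscr{A},\mathscr{B})$ be the category whose objects are Frobenius monoidal functors $\mathscr{A}\to\mathscr{B}$ and whose morphisms are all natural transformations between them. For $F,G$ in $\mathrm{Frob}(\mathscr{A},\mathscr{B})$, let $(F\otimes G)A=FA\otimes GA$, with monoidal structure $r=(r^F_{A,B}\otimes r^G_{A,B})(1\otimes c^{-1}_{FB,GA}\otimes 1)$, $r_0=r^F_0\otimes r^G_0$, and comonoidal structure $i=(1\otimes c_{FB,GA}\otimes 1)(i^F_{A,B}\otimes i^G_{A,B})$, $i_0=i^F_0\otimes i^G_0$. Then $F\otimes G$ is a Frobenius monoidal functor, and with this pointwise tensor product, unit the constant functor at $I$, and braiding $(c_{F,G})_A=c_{FA,GA}$, $\mathrm{Frob}(\mathscr{A},\mathscr{B})$ is a braided monoidal category.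
   Context: A Frobenius monoidal functor is a functor $F$ that is monoidal $(F,r,r_0)$ (with $r_{A,B}:FA\otimes FB\to F(A\otimes B)$, $r_0:I\to FI$) and comonoidal $(F,i,i_0)$ (with $i_{A,B}:F(A\otimes B)\to FA\otimes FB$, $i_0:FI\to I$), such that for all objects $A,B,C$: $i_{A,B\otimes C}\circ r_{A\otimes B,C} = (1\otimes r_{B,C})\circ(i_{A,B}\otimes 1)$ and $i_{A\otimes B,C}\circ r_{A,B\otimes C} = (r_{A,B}\otimes 1)\circ(1\otimes i_{B,C})$. *)

From Stdlib Require Import ProofIrrelevance FunctionalExtensionality.

Set Universe Polymorphism.
Set Implicit Arguments.
Unset Strict Implicit.

Record Category := {
  ob :> Type;
  hom : ob -> ob -> Type;
  idm : forall X : ob, hom X X;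
  comp : forall X Y Z : ob, hom Y Z -> hom X Y -> hom X Z;
  comp_idl : forall (X Y : ob) (f : hom X Y), comp (idm Y) f = f;
  comp_idr : forall (X Y : ob) (f : hom X Y), comp f (idm X) = f;
  comp_assoc : forall (W X Y Z : ob) (h : hom Y Z) (g : hom X Y) (f : hom W X),
      comp h (comp g f) = comp (comp h g) f
}.
Arguments hom {c} X Y.
Arguments idm {c} X.
Arguments comp {c X Y Z} g f.

Notation "g ∘ f" := (comp g f) (at level 40, left associativity).

Definition eqhom (C : Category) (X Y : C) (p : X = Y) : hom X Y :=
  match p in _ = Y' return hom X Y' with eq_refl => idm X end.

Record MonData (C : Category) (tens : C -> C -> C) (I : C) := {
  tensm : forall X X' Y Y' : C, hom X X' -> hom Y Y' -> hom (tens X Y) (tens X' Y');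
  alpha : forall X Y Z : C, hom (tens (tens X Y) Z) (tens X (tens Y Z));
  alpha_inv : forall X Y Z : C, hom (tens X (tens Y Z)) (tens (tens X Y) Z);
  lambda : forall X : C, hom (tens I X) X;
  lambda_inv : forall X : C, hom X (tens I X);
  rho : forall X : C, hom (tens X I) X;
  rho_inv : forall X : C, hom X (tens X I)
}.
Arguments tensm {C tens I} m {X X' Y Y'} f g.
Arguments alpha {C tens I} m X Y Z.
Arguments alpha_inv {C tens I} m X Y Z.
Arguments lambda {C tens I} m X.
Arguments lambda_inv {C tens I} m X.
Arguments rho {C tens I} m X.
Arguments rho_inv {C tens I} m X.

Section MonLawsSec.
Context {C : Category} {tens : C -> C -> C} {I : C} (M : @MonData C tens I).
Local Notation "f ⊗ g" := (tensm M f g) (at level 30, right associativity).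
Local Notation "X ⊙ Y" := (tens X Y) (at level 30, right associativity).
Local Notation a := (alpha M).
Local Notation ai := (alpha_inv M).
Local Notation l := (lambda M).
Local Notation li := (lambda_inv M).
Local Notation r := (rho M).
Local Notation ri := (rho_inv M).

Record MonLaws : Prop := {
  tensm_id : forall X Y : C, idm X ⊗ idm Y = idm (X ⊙ Y);
  tensm_comp : forall (X X' X'' Y Y' Y'' : C) (f : hom X X') (f' : hom X' X'')
      (g : hom Y Y') (g' : hom Y' Y''), (f' ∘ f) ⊗ (g' ∘ g) = (f' ⊗ g') ∘ (f ⊗ g);
  alpha_iso1 : forall X Y Z : C, ai X Y Z ∘ a X Y Z = idm ((X ⊙ Y) ⊙ Z);
  alpha_iso2 : forall X Y Z : C, a X Y Z ∘ ai X Y Z = idm (X ⊙ (Y ⊙ Z));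
  alpha_nat : forall (X X' Y Y' Z Z' : C) (f : hom X X') (g : hom Y Y') (h : hom Z Z'),
      a X' Y' Z' ∘ ((f ⊗ g) ⊗ h) = (f ⊗ (g ⊗ h)) ∘ a X Y Z;
  lambda_iso1 : forall X : C, li X ∘ l X = idm (I ⊙ X);
  lambda_iso2 : forall X : C, l X ∘ li X = idm X;
  lambda_nat : forall (X X' : C) (f : hom X X'), f ∘ l X = l X' ∘ (idm I ⊗ f);
  rho_iso1 : forall X : C, ri X ∘ r X = idm (X ⊙ I);
  rho_iso2 : forall X : C, r X ∘ ri X = idm X;
  rho_nat : forall (X X' : C) (f : hom X X'), f ∘ r X = r X' ∘ (f ⊗ idm I);
  pentagon : forall W X Y Z : C,
      a W X (Y ⊙ Z) ∘ a (W ⊙ X) Y Z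
      = (idm W ⊗ a X Y Z) ∘ a W (X ⊙ Y) Z ∘ (a W X Y ⊗ idm Z);
  triangle : forall X Y : C, (idm X ⊗ l Y) ∘ a X I Y = r X ⊗ idm Y
}.

Record BraidLaws (c : forall X Y : C, hom (X ⊙ Y) (Y ⊙ X))
                 (cinv : forall X Y : C, hom (Y ⊙ X) (X ⊙ Y)) : Prop := {
  braid_iso1 : forall X Y : C, cinv X Y ∘ c X Y = idm (X ⊙ Y);
  braid_iso2 : forall X Y : C, c X Y ∘ cinv X Y = idm (Y ⊙ X);
  braid_nat : forall (X X' Y Y' : C) (f : hom X X') (g : hom Y Y'),
      c X' Y' ∘ (f ⊗ g) = (g ⊗ f) ∘ c X Y;
  hexagon1 : forall X Y Z : C,
      a Y Z X ∘ c X (Y ⊙ Z) ∘ a X Y Z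
      = (idm Y ⊗ c X Z) ∘ a Y X Z ∘ (c X Y ⊗ idm Z);
  hexagon2 : forall X Y Z : C,
      ai Z X Y ∘ c (X ⊙ Y) Z ∘ ai X Y Z
      = (c X Z ⊗ idm Y) ∘ ai X Z Y ∘ (idm X ⊗ c Y Z)
}.

Definition IsStrict : Prop :=
  (exists pa : forall X Y Z : C, (X ⊙ Y) ⊙ Z = X ⊙ (Y ⊙ Z),
      forall X Y Z : C, a X Y Z = eqhom (pa X Y Z)) /\
  (exists pl : forall X : C, I ⊙ X = X, forall X : C, l X = eqhom (pl X)) /\
  (exists pr : forall X : C, X ⊙ I = X, forall X : C, r X = eqhom (pr X)).
End MonLawsSec.

Record MonCat := {
  mc_cat :> Category;
  mc_tens : mc_cat -> mc_cat -> mc_cat;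
  mc_unit : mc_cat;
  mc_data : @MonData mc_cat mc_tens mc_unit;
  mc_laws : MonLaws mc_data
}.

Record StrictMonCat := {
  smc :> MonCat;
  smc_strict : IsStrict (mc_data smc)
}.

Record BraidedMonCat := {
  bmc :> MonCat;
  bmc_c : forall X Y : bmc, hom (@mc_tens bmc X Y) (@mc_tens bmc Y X);
  bmc_cinv : forall X Y : bmc, hom (@mc_tens bmc Y X) (@mc_tens bmc X Y);
  bmc_laws : BraidLaws (mc_data bmc) bmc_c bmc_cinv
}.

Record StrictBraidedMonCat := {
  sbmc :> BraidedMonCat;
  sbmc_strict : IsStrict (mc_data sbmc)
}.

Definition tn (A : MonCat) (X Y : A) : A := @mc_tens A X Y.
Definition un (A : MonCat) : A := @mc_unit A.
Definition tm (A : MonCat) {X X' Y Y' : A} (f : hom X X') (g : hom Y Y')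
  : hom (tn X Y) (tn X' Y') := tensm (mc_data A) f g.
Definition al (A : MonCat) (X Y Z : A) := alpha (mc_data A) X Y Z.
Definition ali (A : MonCat) (X Y Z : A) := alpha_inv (mc_data A) X Y Z.
Definition la (A : MonCat) (X : A) := lambda (mc_data A) X.
Definition lai (A : MonCat) (X : A) := lambda_inv (mc_data A) X.
Definition ro (A : MonCat) (X : A) := rho (mc_data A) X.
Definition roi (A : MonCat) (X : A) := rho_inv (mc_data A) X.
Arguments al {A} X Y Z.
Arguments ali {A} X Y Z.
Arguments la {A} X.
Arguments lai {A} X.
Arguments ro {A} X.
Arguments roi {A} X.
Arguments tn {A} X Y.
Definition br (B : BraidedMonCat) (X Y : B) := bmc_c X Y.
Definition bri (B : BraidedMonCat) (X Y : B) := bmc_cinv X Y.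
Arguments br {B} X Y.
Arguments bri {B} X Y.

Record FunData (A B : MonCat) := {
  fob :> A -> B;
  fmap : forall X Y : A, hom X Y -> hom (fob X) (fob Y);
  fr : forall X Y : A, hom (tn (fob X) (fob Y)) (fob (tn X Y));
  fr0 : hom (un B) (fob (un A));
  fi : forall X Y : A, hom (fob (tn X Y)) (tn (fob X) (fob Y));
  fi0 : hom (fob (un A)) (un B)
}.
Arguments fmap {A B} f {X Y} h.
Arguments fr {A B} f X Y.
Arguments fr0 {A B} f.
Arguments fi {A B} f X Y.
Arguments fi0 {A B} f.

(* Frobenius monoidal functor (coherences written with the associators and
   unitors; for strict A, B these are identities and the conditions are
   literally those of the paper). *)
Record IsFrob (A B : MonCat) (F : FunData A B) : Prop := {
  fmap_id : forall X : A, fmap F (idm X) = idm (F X);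
  fmap_comp : forall (X Y Z : A) (g : hom Y Z) (f : hom X Y),
      fmap F (g ∘ f) = fmap F g ∘ fmap F f;
  fr_nat : forall (X X' Y Y' : A) (f : hom X X') (g : hom Y Y'),
      fr F X' Y' ∘ tm (fmap F f) (fmap F g) = fmap F (tm f g) ∘ fr F X Y;
  fr_assoc : forall X Y Z : A,
      fmap F (al X Y Z) ∘ fr F (tn X Y) Z ∘ tm (fr F X Y) (idm (F Z))
      = fr F X (tn Y Z) ∘ tm (idm (F X)) (fr F Y Z) ∘ al (F X) (F Y) (F Z);
  fr_lunit : forall X : A,
      fmap F (la X) ∘ fr F (un A) X ∘ tm (fr0 F) (idm (F X)) = la (F X);
  fr_runit : forall X : A,
      fmap F (ro X) ∘ fr F X (un A) ∘ tm (idm (F X)) (fr0 F) = ro (F X);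
  fi_nat : forall (X X' Y Y' : A) (f : hom X X') (g : hom Y Y'),
      tm (fmap F f) (fmap F g) ∘ fi F X Y = fi F X' Y' ∘ fmap F (tm f g);
  fi_coassoc : forall X Y Z : A,
      al (F X) (F Y) (F Z) ∘ tm (fi F X Y) (idm (F Z)) ∘ fi F (tn X Y) Z
      = tm (idm (F X)) (fi F Y Z) ∘ fi F X (tn Y Z) ∘ fmap F (al X Y Z);
  fi_lcounit : forall X : A,
      la (F X) ∘ tm (fi0 F) (idm (F X)) ∘ fi F (un A) X = fmap F (la X);
  fi_rcounit : forall X : A,
      ro (F X) ∘ tm (idm (F X)) (fi0 F) ∘ fi F X (un A) = fmap F (ro X);
  frob1 : forall X Y Z : A,
      fi F X (tn Y Z) ∘ fmap F (al X Y Z) ∘ fr F (tn X Y) Z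
      = tm (idm (F X)) (fr F Y Z) ∘ al (F X) (F Y) (F Z) ∘ tm (fi F X Y) (idm (F Z));
  frob2 : forall X Y Z : A,
      fi F (tn X Y) Z ∘ fmap F (ali X Y Z) ∘ fr F X (tn Y Z)
      = tm (fr F X Y) (idm (F Z)) ∘ ali (F X) (F Y) (F Z) ∘ tm (idm (F X)) (fi F Y Z)
}.

Section Ptens.
Context {A : MonCat} {B : BraidedMonCat} (F G : FunData A B).

(* r_{X,Y} = (r^F ⊗ r^G)(1 ⊗ c^{-1}_{FY,GX} ⊗ 1) *)
Definition ptens_r (X Y : A)
  : hom (tn (tn (F X) (G X)) (tn (F Y) (G Y))) (tn (F (tn X Y)) (G (tn X Y))) :=
  tm (fr F X Y) (fr G X Y)
  ∘ ali (F X) (F Y) (tn (G X) (G Y))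
  ∘ tm (idm (F X)) (al (F Y) (G X) (G Y))
  ∘ tm (idm (F X)) (tm (bri (F Y) (G X)) (idm (G Y)))
  ∘ tm (idm (F X)) (ali (G X) (F Y) (G Y))
  ∘ al (F X) (G X) (tn (F Y) (G Y)).

(* i_{X,Y} = (1 ⊗ c_{FY,GX} ⊗ 1)(i^F ⊗ i^G) *)
Definition ptens_i (X Y : A)
  : hom (tn (F (tn X Y)) (G (tn X Y))) (tn (tn (F X) (G X)) (tn (F Y) (G Y))) :=
  ali (F X) (G X) (tn (F Y) (G Y))
  ∘ tm (idm (F X)) (al (G X) (F Y) (G Y))
  ∘ tm (idm (F X)) (tm (br (F Y) (G X)) (idm (G Y)))
  ∘ tm (idm (F X)) (ali (F Y) (G X) (G Y))
  ∘ al (F X) (F Y) (tn (G X) (G Y))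
  ∘ tm (fi F X Y) (fi G X Y).

Definition ptens : FunData A B := {|
  fob := fun X => tn (F X) (G X);
  fmap := fun X Y h => tm (fmap F h) (fmap G h);
  fr := ptens_r;
  fr0 := tm (fr0 F) (fr0 G) ∘ lai (un B);
  fi := ptens_i;
  fi0 := la (un B) ∘ tm (fi0 F) (fi0 G)
|}.
End Ptens.

Definition const_unit (A : MonCat) (B : MonCat) : FunData A B := {|
  fob := fun _ => un B;
  fmap := fun _ _ _ => idm (un B);
  fr := fun _ _ => la (un B);
  fr0 := idm (un B);
  fi := fun _ _ => lai (un B);
  fi0 := idm (un B)
|}.

Definition is_natural (A B : MonCat) (F G : FunData A B)
  (theta : forall X : A, hom (F X) (G X)) : Prop :=
  forall (X Y : A) (f : hom X Y), theta Y ∘ fmap F f = fmap G f ∘ theta X.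

Definition FrobOb (A B : MonCat) := { F : FunData A B | IsFrob F }.

Definition NatTrans (A B : MonCat) (F G : FunData A B) :=
  { theta : forall X : A, hom (F X) (G X) | is_natural theta }.

Section FrobCatSec.
Context (A B : MonCat).

Lemma nt_id_nat (F : FunData A B) : is_natural (F := F) (G := F) (fun X => idm (F X)).
Proof. intros X Y f. now rewrite comp_idl, comp_idr. Qed.

Definition nt_id (F : FunData A B) : NatTrans F F := exist _ _ (nt_id_nat F).

Lemma nt_comp_nat (F G H : FunData A B) (t : NatTrans G H) (s : NatTrans F G) :
  is_natural (F := F) (G := H) (fun X => proj1_sig t X ∘ proj1_sig s X).
Proof.
  destruct t as [t Ht], s as [s Hs]; intros X Y f; simpl.
  rewrite <- comp_assoc, Hs, comp_assoc, Ht, <- comp_assoc. reflexivity.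
Qed.

Definition nt_comp (F G H : FunData A B) (t : NatTrans G H) (s : NatTrans F G)
  : NatTrans F H := exist _ _ (nt_comp_nat t s).

Lemma nt_eq (F G : FunData A B) (t s : NatTrans F G) :
  (forall X, proj1_sig t X = proj1_sig s X) -> t = s.
Proof.
  destruct t as [t Ht], s as [s Hs]; simpl; intros E.
  assert (t = s) as <- by (apply functional_extensionality_dep; exact E).
  f_equal; apply proof_irrelevance.
Qed.

Definition FrobCat : Category.
Proof.
  refine {| ob := FrobOb A B;
            hom := fun F G => NatTrans (proj1_sig F) (proj1_sig G);
            idm := fun F => nt_id (proj1_sig F);
            comp := fun F G H t s => nt_comp t s |}.
  - intros; apply nt_eq; intros; simpl; apply comp_idl.
  - intros; apply nt_eq; intros; simpl; apply comp_idr.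
  - intros; apply nt_eq; intros; simpl; apply comp_assoc.
Defined.
End FrobCatSec.

From Stdlib Require Import ProofIrrelevance List.
Import ListNotations.
Set Implicit Arguments.
Unset Strict Implicit.

(* Since B is strict, iterated tensor products in B are modelled by words
   (lists) of objects, and its coherence isomorphisms become transports along
   equalities of words.  The structure maps of F ⊗ G are those of F and G
   tensored together and composed with the middle-four interchange
   (FX GX)(FY GY) -> (FX FY)(GX GY) built from the inverse braiding, or with
   its inverse on the comonoidal side.  Naturality of the interchange moves
   r^F ⊗ r^G and i^F ⊗ i^G past it, so every Frobenius-functor axiom of F ⊗ G
   reduces to the same axiom for F and G, provided the interchange is
   associative (a consequence of the hexagon axioms) and unital (braiding with
   the unit is trivial).  The monoidal and braided structure of Frob(A,B) is
   pointwise, so its laws are those of B. *)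

Section CategoryFacts.
Context {C : Category}.

Lemma eqhom_irrel (X Y : C) (p q : X = Y) : eqhom p = eqhom q.
Proof. now rewrite (proof_irrelevance _ p q). Qed.

Lemma eqhom_id (X : C) (p : X = X) : eqhom p = idm X.
Proof. now rewrite (proof_irrelevance _ p eq_refl). Qed.

Lemma eqhom_trans (X Y Z : C) (p : X = Y) (q : Y = Z) :
  eqhom q ∘ eqhom p = eqhom (eq_trans p q).
Proof. destruct q; apply comp_idl. Qed.

Lemma eqhom_trans_r (W X Y Z : C) (f : hom Z W) (p : X = Y) (q : Y = Z) :
  f ∘ eqhom q ∘ eqhom p = f ∘ eqhom (eq_trans p q).
Proof. now rewrite <- comp_assoc, eqhom_trans. Qed.

Lemma comp_cong (X Y Z : C) (f f' : hom Y Z) (g g' : hom X Y) :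
  f = f' -> g = g' -> f ∘ g = f' ∘ g'.
Proof. now intros -> ->. Qed.

Lemma comp_assoc_rw (W X Y Z : C) (h : hom Z W) (p : hom Y Z) (q : hom X Y) (r : hom X Z) :
  p ∘ q = r -> h ∘ p ∘ q = h ∘ r.
Proof. intros <-; symmetry; apply comp_assoc. Qed.

Lemma eqhom_comp_cong (X Y Z : C) (p q : Y = Z) (f g : hom X Y) :
  f = g -> eqhom p ∘ f = eqhom q ∘ g.
Proof. intros ->; f_equal; apply eqhom_irrel. Qed.

Lemma comp_eqhom_of_id (X Y : C) (f : hom Y Y) (p q : X = Y) :
  f = idm Y -> f ∘ eqhom p = eqhom q.
Proof. intros ->; rewrite comp_idl; apply eqhom_irrel. Qed.

Lemma inverse_unique (X Y : C) (f : hom X Y) (g g' : hom Y X) :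
  g ∘ f = idm X -> f ∘ g' = idm Y -> g = g'.
Proof.
  intros H1 H2; now rewrite <- (comp_idr g), <- H2, comp_assoc, H1, comp_idl.
Qed.

Lemma eqhom_left_inverse (X Y : C) (p : X = Y) (f : hom Y X) :
  f ∘ eqhom p = idm X -> forall q : Y = X, f = eqhom q.
Proof.
  intros H q; apply (inverse_unique (f := eqhom p)); [exact H |].
  rewrite eqhom_trans; apply eqhom_id.
Qed.

Lemma idempotent_split_mono_id (X : C) (f g : hom X X) :
  g ∘ f = idm X -> f = f ∘ f -> f = idm X.
Proof.
  intros H1 H2; rewrite <- H1; rewrite H2 at 2.
  now rewrite comp_assoc, H1, comp_idl.
Qed.

Section InvertibleSquare.
Variables (X Y Z W : C) (m2 : hom Y Z) (M : hom X Y) (m1 : hom W Z) (N : hom X W).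
Hypothesis square : m2 ∘ M = m1 ∘ N.

Lemma square_rotate_l (n1 : hom Z W) (Mi : hom Y X) :
  n1 ∘ m1 = idm W -> M ∘ Mi = idm Y -> n1 ∘ m2 = N ∘ Mi.
Proof.
  intros H1 H2; rewrite <- (comp_idr (n1 ∘ m2)), <- H2, !comp_assoc.
  now rewrite <- (comp_assoc n1 m2 M), square, comp_assoc, H1, comp_idl.
Qed.

Lemma square_rotate_r (n2 : hom Z Y) (Ni : hom W X) :
  n2 ∘ m2 = idm Y -> N ∘ Ni = idm W -> n2 ∘ m1 = M ∘ Ni.
Proof.
  intros H1 H2; rewrite <- (comp_idr (n2 ∘ m1)), <- H2, !comp_assoc.
  now rewrite <- (comp_assoc n2 m1 N), <- square, comp_assoc, H1, comp_idl.
Qed.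

Lemma square_inverse (n2 : hom Z Y) (Mi : hom Y X) (n1 : hom Z W) (Ni : hom W X) :
  Mi ∘ M = idm X -> n2 ∘ m2 = idm Y -> N ∘ Ni = idm W -> m1 ∘ n1 = idm Z ->
  Mi ∘ n2 = Ni ∘ n1.
Proof.
  intros H1 H2 H3 H4; apply (inverse_unique (f := m2 ∘ M)).
  - now rewrite comp_assoc, <- (comp_assoc Mi n2 m2), H2, comp_idr.
  - now rewrite square, comp_assoc, <- (comp_assoc m1 N Ni), H3, comp_idr.
Qed.
End InvertibleSquare.
End CategoryFacts.

Ltac eqhom_norm :=
  repeat rewrite comp_assoc;
  repeat first [ rewrite eqhom_trans_r | rewrite eqhom_trans | rewrite eqhom_id
               | rewrite comp_idl | rewrite comp_idr ].
Ltac eqhom_close := repeat first [ reflexivity | apply eqhom_irrel | apply comp_cong ].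

(* Rewrite with a coherence lemma instantiated at [eq_refl] for its transport
   equations; the [chain] variants also rewrite inside a left-associated
   composite. *)
Ltac specialize_refl H := repeat (specialize (H eq_refl)).
Ltac simpl_refl H :=
  cbn [eqhom app] in H; try unfold tn in H; try unfold un in H;
  repeat rewrite comp_idl in H; repeat rewrite comp_idr in H.
Ltac prep_refl t H := pose proof t as H; specialize_refl H; simpl_refl H;
  cbn [app]; try unfold tn; try unfold un.
Ltac rw_refl t := let H := fresh in prep_refl t H; rewrite H; clear H.
Ltac rw_refl_rev t := let H := fresh in prep_refl t H; rewrite <- H; clear H.
Ltac rw_chain t := let H := fresh in prep_refl t H;
  repeat rewrite comp_assoc; first [ rewrite H | erewrite (comp_assoc_rw _ H) ]; clear H.
Ltac rw_chain_rev t := let H := fresh in prep_refl t H; symmetry in H;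
  repeat rewrite comp_assoc; first [ rewrite H | erewrite (comp_assoc_rw _ H) ]; clear H.

Section MonoidalFacts.
Variable M : MonCat.
Let L := mc_laws M.

Lemma tm_comp (X X' X'' Y Y' Y'' : M) (f : hom X X') (f' : hom X' X'')
      (g : hom Y Y') (g' : hom Y' Y'') : tm (f' ∘ f) (g' ∘ g) = tm f' g' ∘ tm f g.
Proof. apply (tensm_comp L). Qed.

Lemma tm_id (X Y : M) : tm (idm X) (idm Y) = idm (tn X Y).
Proof. apply (tensm_id L). Qed.

Lemma tm_comp_id (X1 X2 X3 Y : M) (f : hom X2 X3) (g : hom X1 X2) :
  tm (f ∘ g) (idm Y) = tm f (idm Y) ∘ tm g (idm Y).
Proof. now rewrite <- tm_comp, comp_idl. Qed.

Lemma tm_id_comp (X1 X2 X3 Y : M) (f : hom X2 X3) (g : hom X1 X2) :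
  tm (idm Y) (f ∘ g) = tm (idm Y) f ∘ tm (idm Y) g.
Proof. now rewrite <- tm_comp, comp_idl. Qed.

Lemma tm_comp_assoc_r (W X X' X'' Y Y' Y'' : M) (h : hom (tn X'' Y'') W)
      (f : hom X X') (f' : hom X' X'') (g : hom Y Y') (g' : hom Y' Y'') :
  h ∘ tm f' g' ∘ tm f g = h ∘ tm (f' ∘ f) (g' ∘ g).
Proof. now rewrite tm_comp, comp_assoc. Qed.

Lemma tm_comp3_l (X1 X2 X3 X4 Y Y' : M) (f1 : hom X3 X4) (f2 : hom X2 X3)
      (f3 : hom X1 X2) (g : hom Y Y') :
  tm (f1 ∘ f2 ∘ f3) g = tm f1 (idm Y') ∘ tm f2 g ∘ tm f3 (idm Y).
Proof.
  transitivity (tm (f1 ∘ f2 ∘ f3) (idm Y' ∘ g ∘ idm Y)).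
  - now rewrite comp_idl, comp_idr.
  - now rewrite !tm_comp.
Qed.

Lemma tm_comp3_r (X X' Y1 Y2 Y3 Y4 : M) (f1 : hom Y3 Y4) (f2 : hom Y2 Y3)
      (f3 : hom Y1 Y2) (g : hom X X') :
  tm g (f1 ∘ f2 ∘ f3) = tm (idm X') f1 ∘ tm g f2 ∘ tm (idm X) f3.
Proof.
  transitivity (tm (idm X' ∘ g ∘ idm X) (f1 ∘ f2 ∘ f3)).
  - now rewrite comp_idl, comp_idr.
  - now rewrite !tm_comp.
Qed.

Lemma tm_unit_l (X Y : M) (g : hom X Y) : tm (idm (un M)) g = lai Y ∘ g ∘ la X.
Proof.
  rewrite <- comp_assoc, (lambda_nat L), comp_assoc.
  change (tm (idm (un M)) g = lai Y ∘ la Y ∘ tm (idm (un M)) g).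
  now rewrite (lambda_iso1 L), comp_idl.
Qed.

Lemma tm_unit_r (X Y : M) (g : hom X Y) : tm g (idm (un M)) = roi Y ∘ g ∘ ro X.
Proof.
  rewrite <- comp_assoc, (rho_nat L), comp_assoc.
  change (tm g (idm (un M)) = roi Y ∘ ro Y ∘ tm g (idm (un M))).
  now rewrite (rho_iso1 L), comp_idl.
Qed.

Lemma tm_assoc_l (X X' Y Y' Z Z' : M) (f : hom X X') (g : hom Y Y') (h : hom Z Z') :
  tm (tm f g) h = ali X' Y' Z' ∘ tm f (tm g h) ∘ al X Y Z.
Proof.
  rewrite <- comp_assoc; unfold al, tm; rewrite <- (alpha_nat L), comp_assoc.
  now rewrite (alpha_iso1 L), comp_idl.
Qed.

Lemma tm_assoc_r (X X' Y Y' Z Z' : M) (f : hom X X') (g : hom Y Y') (h : hom Z Z') :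
  tm f (tm g h) = al X' Y' Z' ∘ tm (tm f g) h ∘ ali X Y Z.
Proof.
  rewrite tm_assoc_l, !comp_assoc; unfold al, ali.
  now rewrite (alpha_iso2 L), comp_idl, <- comp_assoc, (alpha_iso2 L), comp_idr.
Qed.

Lemma ali_nat (X X' Y Y' Z Z' : M) (f : hom X X') (g : hom Y Y') (h : hom Z Z') :
  ali X' Y' Z' ∘ tm f (tm g h) = tm (tm f g) h ∘ ali X Y Z.
Proof.
  rewrite tm_assoc_l, <- !comp_assoc; unfold al, ali.
  now rewrite (alpha_iso2 L), comp_idr.
Qed.

Lemma lai_nat (X Y : M) (g : hom X Y) : lai Y ∘ g = tm (idm (un M)) g ∘ lai X.
Proof.
  rewrite tm_unit_l, <- !comp_assoc; unfold la, lai.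
  now rewrite (lambda_iso2 L), comp_idr.
Qed.

Lemma roi_nat (X Y : M) (g : hom X Y) : roi Y ∘ g = tm g (idm (un M)) ∘ roi X.
Proof.
  rewrite tm_unit_r, <- !comp_assoc; unfold ro, roi.
  now rewrite (rho_iso2 L), comp_idr.
Qed.
Lemma tm_eqhom (X X' Y Y' : M) (p : X = X') (q : Y = Y') (r : tn X Y = tn X' Y') :
  tm (eqhom p) (eqhom q) = eqhom r.
Proof. destruct p, q; simpl; rewrite tm_id; symmetry; apply eqhom_id. Qed.
Lemma tm_eqhom_id (X X' Y : M) (p : X = X') :
  tm (eqhom p) (idm Y) = eqhom (f_equal (fun Z => tn Z Y) p).
Proof. exact (tm_eqhom p eq_refl _). Qed.
Lemma tm_id_eqhom (X Y Y' : M) (p : Y = Y') :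
  tm (idm X) (eqhom p) = eqhom (f_equal (fun Z => tn X Z) p).
Proof. exact (tm_eqhom eq_refl p _). Qed.

End MonoidalFacts.

Ltac tm_transport :=
  repeat first [ rewrite tm_comp3_l | rewrite tm_comp3_r | rewrite tm_eqhom_id
               | rewrite tm_id_eqhom | rewrite tm_id ].

Section StrictWords.
Variable M : MonCat.
Hypothesis SM : IsStrict (mc_data M).
Let L := mc_laws M.

Lemma tens_assoc_eq (X Y Z : M) : tn (tn X Y) Z = tn X (tn Y Z).
Proof. destruct SM as [[pa _] _]; apply pa. Qed.
Lemma tens_unit_l_eq (X : M) : tn (un M) X = X.
Proof. destruct SM as [_ [[pl _] _]]; apply pl. Qed.
Lemma tens_unit_r_eq (X : M) : tn X (un M) = X.
Proof. destruct SM as [_ [_ [pr _]]]; apply pr. Qed.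

Lemma al_eqhom (X Y Z : M) : al X Y Z = eqhom (tens_assoc_eq X Y Z).
Proof. destruct SM as [[pa H] _]; unfold al; rewrite H; apply eqhom_irrel. Qed.
Lemma la_eqhom (X : M) : la X = eqhom (tens_unit_l_eq X).
Proof. destruct SM as [_ [[pl H] _]]; unfold la; rewrite H; apply eqhom_irrel. Qed.
Lemma ro_eqhom (X : M) : ro X = eqhom (tens_unit_r_eq X).
Proof. destruct SM as [_ [_ [pr H]]]; unfold ro; rewrite H; apply eqhom_irrel. Qed.

Lemma ali_eqhom (X Y Z : M) : ali X Y Z = eqhom (eq_sym (tens_assoc_eq X Y Z)).
Proof.
  apply (eqhom_left_inverse (p := tens_assoc_eq X Y Z)).
  rewrite <- al_eqhom; apply (alpha_iso1 L).
Qed.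
Lemma lai_eqhom (X : M) : lai X = eqhom (eq_sym (tens_unit_l_eq X)).
Proof.
  apply (eqhom_left_inverse (p := tens_unit_l_eq X)).
  rewrite <- la_eqhom; apply (lambda_iso1 L).
Qed.
Lemma roi_eqhom (X : M) : roi X = eqhom (eq_sym (tens_unit_r_eq X)).
Proof.
  apply (eqhom_left_inverse (p := tens_unit_r_eq X)).
  rewrite <- ro_eqhom; apply (rho_iso1 L).
Qed.

(* A word [x1; ...; xn] is read as x1 ⊗ (... ⊗ xn), with no trailing unit,
   so that [word [x] = x] and [word [x; y] = tn x y] hold by conversion. *)
Fixpoint word (l : list M) : M :=
  match l with
  | [] => un M
  | x :: t => match t with [] => x | _ :: _ => tn x (word t) end
  end.

Lemma word_app (a c : list M) : tn (word a) (word c) = word (a ++ c).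
Proof.
  induction a as [|x t IH].
  - apply tens_unit_l_eq.
  - destruct t as [|y t'].
    + destruct c; [apply tens_unit_r_eq | reflexivity].
    + change (tn (tn x (word (y :: t'))) (word c) = tn x (word ((y :: t') ++ c))).
      now rewrite tens_assoc_eq, IH.
Qed.

Definition whom (a b : list M) := hom (word a) (word b).

(* Identity casts fixing the word indices, which unification cannot recover
   through [word]. *)
Definition w11 {x y : M} (f : hom x y) : whom [x] [y] := f.
Definition w21 {x y z : M} (f : hom (tn x y) z) : whom [x; y] [z] := f.
Definition w12 {x y z : M} (f : hom z (tn x y)) : whom [z] [x; y] := f.
Definition w01 {y : M} (f : hom (un M) y) : whom [] [y] := f.
Definition w10 {y : M} (f : hom y (un M)) : whom [y] [] := f.

Definition wtens {a b c d : list M} (f : whom a b) (g : whom c d) : whom (a ++ c) (b ++ d) :=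
  eqhom (word_app b d) ∘ tm f g ∘ eqhom (eq_sym (word_app a c)).

Lemma tm_wtens {a b c d : list M} (f : whom a b) (g : whom c d) :
  tm f g = eqhom (eq_sym (word_app b d)) ∘ wtens f g ∘ eqhom (word_app a c).
Proof. unfold wtens; now eqhom_norm. Qed.

Lemma wtens_comp {a b e c d h : list M} (f : whom b e) (f' : whom a b) (g : whom d h)
  (g' : whom c d) : wtens (f ∘ f') (g ∘ g') = wtens f g ∘ wtens f' g'.
Proof. unfold wtens; rewrite tm_comp; now eqhom_norm. Qed.

Lemma wtens_comp_assoc_r {l a b e c d h : list M} (X : hom (word (e ++ h)) (word l))
  (f : whom b e) (f' : whom a b) (g : whom d h) (g' : whom c d) :
  X ∘ wtens f g ∘ wtens f' g' = X ∘ wtens (f ∘ f') (g ∘ g').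
Proof. now rewrite wtens_comp, comp_assoc. Qed.

Lemma wtens_id (a c : list M) : wtens (idm (word a)) (idm (word c)) = idm (word (a ++ c)).
Proof. unfold wtens; rewrite tm_id; now eqhom_norm. Qed.

Lemma wtens_cong {a b c d : list M} (f f' : whom a b) (g g' : whom c d) :
  f = f' -> g = g' -> wtens f g = wtens f' g'.
Proof. now intros -> ->. Qed.

Lemma wtens_comp_id {a b e c : list M} (f : whom b e) (f' : whom a b) :
  wtens (f ∘ f') (idm (word c)) = wtens f (idm (word c)) ∘ wtens f' (idm (word c)).
Proof. now rewrite <- wtens_comp, comp_idl. Qed.
Lemma wtens_id_comp {a b e c : list M} (f : whom b e) (f' : whom a b) :
  wtens (idm (word c)) (f ∘ f') = wtens (idm (word c)) f ∘ wtens (idm (word c)) f'.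
Proof. now rewrite <- wtens_comp, comp_idl. Qed.

Lemma wtens_retraction_id {a b c : list M} (f' : whom b a) (f : whom a b) :
  f' ∘ f = idm (word a) ->
  wtens f' (idm (word c)) ∘ wtens f (idm (word c)) = idm (word (a ++ c)).
Proof. intros H; rewrite <- wtens_comp, H, comp_idl; apply wtens_id. Qed.
Lemma wtens_id_retraction {a b c : list M} (f' : whom b a) (f : whom a b) :
  f' ∘ f = idm (word a) ->
  wtens (idm (word c)) f' ∘ wtens (idm (word c)) f = idm (word (c ++ a)).
Proof. intros H; rewrite <- wtens_comp, H, comp_idl; apply wtens_id. Qed.

Lemma wtens_nil_l {c d : list M} (g : whom c d) : wtens (idm (word [])) g = g.
Proof. unfold wtens; rewrite tm_unit_l, la_eqhom, lai_eqhom; now eqhom_norm. Qed.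

(* Coherence lemmas quantify over the transport equations, so that they can be
   used with [eq_refl] whenever the lists compute to the same word. *)
Lemma wtens_nil_r {a b : list M} (f : whom a b) (p : word (a ++ []) = word a)
  (q : word (b ++ []) = word b) :
  eqhom q ∘ wtens f (idm (word [])) = f ∘ eqhom p.
Proof. unfold wtens; rewrite tm_unit_r, ro_eqhom, roi_eqhom; eqhom_norm; eqhom_close. Qed.

Lemma wtens_assoc {a a' b b' c c' : list M} (f : whom a a') (g : whom b b') (h : whom c c')
  (p : word ((a ++ b) ++ c) = word (a ++ (b ++ c)))
  (q : word ((a' ++ b') ++ c') = word (a' ++ (b' ++ c'))) :
  eqhom q ∘ wtens (wtens f g) h = wtens f (wtens g h) ∘ eqhom p.
Proof.
  unfold wtens.
  rewrite tm_comp3_l, tm_comp3_r, !tm_eqhom_id, !tm_id_eqhom, tm_assoc_l, al_eqhom, ali_eqhom.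
  eqhom_norm; eqhom_close.
Qed.
End StrictWords.

Ltac wtens_merge := match goal with
  | |- context [wtens ?S ?f ?g ∘ wtens ?S ?f' ?g'] => rw_refl_rev (wtens_comp S f f' g g')
  | |- context [_ ∘ wtens ?S ?f ?g ∘ wtens ?S ?f' ?g'] => rw_chain_rev (wtens_comp S f f' g g')
  end.
Ltac wtens_congr := match goal with
  |- @wtens ?M ?S ?a ?b ?c ?d ?f ?g = @wtens _ _ _ _ _ _ ?f' ?g' =>
       apply (@wtens_cong M S a b c d f f' g g') end.

Section BraidedFacts.
Variable B : BraidedMonCat.
Let L := mc_laws B.
Let BL := bmc_laws B.

Lemma br_nat (X X' Y Y' : B) (f : hom X X') (g : hom Y Y') :
  br X' Y' ∘ tm f g = tm g f ∘ br X Y.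
Proof. apply (braid_nat BL). Qed.
Lemma bri_br (X Y : B) : bri X Y ∘ br X Y = idm (tn X Y).
Proof. apply (braid_iso1 BL). Qed.
Lemma br_bri (X Y : B) : br X Y ∘ bri X Y = idm (tn Y X).
Proof. apply (braid_iso2 BL). Qed.

Lemma bri_nat (X X' Y Y' : B) (f : hom X X') (g : hom Y Y') :
  bri X' Y' ∘ tm g f = tm f g ∘ bri X Y.
Proof.
  rewrite <- (comp_idr (bri X' Y' ∘ tm g f)), <- (br_bri X Y).
  rewrite !comp_assoc, <- (comp_assoc (bri X' Y')), <- br_nat, comp_assoc, bri_br.
  now rewrite comp_idl.
Qed.

Lemma br_tens_r (X Y Z : B) :
  br X (tn Y Z)
  = ali Y Z X ∘ tm (idm Y) (br X Z) ∘ al Y X Z ∘ tm (br X Y) (idm Z) ∘ ali X Y Z.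
Proof.
  pose proof (hexagon1 BL X Y Z) as H.
  change (al Y Z X ∘ br X (tn Y Z) ∘ al X Y Z
          = tm (idm Y) (br X Z) ∘ al Y X Z ∘ tm (br X Y) (idm Z)) in H.
  transitivity (ali Y Z X ∘ (al Y Z X ∘ br X (tn Y Z) ∘ al X Y Z) ∘ ali X Y Z).
  - rewrite !comp_assoc; unfold al, ali; rewrite (alpha_iso1 L), comp_idl.
    now rewrite <- comp_assoc, (alpha_iso2 L), comp_idr.
  - now rewrite H, !comp_assoc.
Qed.

Lemma br_tens_l (X Y Z : B) :
  br (tn X Y) Z
  = al Z X Y ∘ tm (br X Z) (idm Y) ∘ ali X Z Y ∘ tm (idm X) (br Y Z) ∘ al X Y Z.
Proof.
  pose proof (hexagon2 BL X Y Z) as H.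
  change (ali Z X Y ∘ br (tn X Y) Z ∘ ali X Y Z
          = tm (br X Z) (idm Y) ∘ ali X Z Y ∘ tm (idm X) (br Y Z)) in H.
  transitivity (al Z X Y ∘ (ali Z X Y ∘ br (tn X Y) Z ∘ ali X Y Z) ∘ al X Y Z).
  - rewrite !comp_assoc; unfold al, ali; rewrite (alpha_iso2 L), comp_idl.
    now rewrite <- comp_assoc, (alpha_iso1 L), comp_idr.
  - now rewrite H, !comp_assoc.
Qed.

Lemma br_transport (X X' Y Y' : B) (p : X = X') (q : Y = Y') :
  br X' Y' = eqhom (f_equal2 (@tn B) q p) ∘ br X Y
             ∘ eqhom (f_equal2 (@tn B) (eq_sym p) (eq_sym q)).
Proof. destruct p, q; now rewrite !eqhom_id, comp_idl, comp_idr. Qed.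
End BraidedFacts.

Section WordBraiding.
Variable B : BraidedMonCat.
Hypothesis SB : IsStrict (mc_data B).
Local Notation word := (@word B).
Local Notation wtens := (wtens SB).

Ltac strictify :=
  repeat first [ rewrite (al_eqhom SB) | rewrite (ali_eqhom SB) ].

Definition wbraid (a b : list B) : whom (a ++ b) (b ++ a) :=
  eqhom (word_app SB b a) ∘ br (word a) (word b) ∘ eqhom (eq_sym (word_app SB a b)).
Definition wbraid_inv (a b : list B) : whom (b ++ a) (a ++ b) :=
  eqhom (word_app SB a b) ∘ bri (word a) (word b) ∘ eqhom (eq_sym (word_app SB b a)).

Lemma wbraid_inv_wbraid (a b : list B) : wbraid_inv a b ∘ wbraid a b = idm (word (a ++ b)).
Proof.
  unfold wbraid_inv, wbraid; eqhom_norm.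
  now rewrite <- comp_assoc with (f := br _ _), bri_br; eqhom_norm.
Qed.
Lemma wbraid_wbraid_inv (a b : list B) : wbraid a b ∘ wbraid_inv a b = idm (word (b ++ a)).
Proof.
  unfold wbraid_inv, wbraid; eqhom_norm.
  now rewrite <- comp_assoc with (f := bri _ _), br_bri; eqhom_norm.
Qed.

Lemma wbraid_hexagon1 (a b c : list B)
  (p : word ((a ++ b) ++ c) = word (a ++ (b ++ c)))
  (r : word ((b ++ a) ++ c) = word (b ++ (a ++ c)))
  (q : word ((b ++ c) ++ a) = word (b ++ (c ++ a))) :
  eqhom q ∘ wbraid a (b ++ c) ∘ eqhom p
  = wtens (idm (word b)) (wbraid a c) ∘ eqhom r ∘ wtens (wbraid a b) (idm (word c)).
Proof.
  unfold wbraid, wtens.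
  rewrite (br_transport eq_refl (word_app SB b c)), (br_tens_r (word a) (word b) (word c)).
  rewrite tm_comp3_r, tm_comp3_l, !tm_eqhom_id, !tm_id_eqhom.
  strictify; eqhom_norm; eqhom_close.
Qed.

Lemma wbraid_hexagon2 (a b c : list B)
  (p : word (a ++ (b ++ c)) = word ((a ++ b) ++ c))
  (r : word (a ++ (c ++ b)) = word ((a ++ c) ++ b))
  (q : word (c ++ (a ++ b)) = word ((c ++ a) ++ b)) :
  eqhom q ∘ wbraid (a ++ b) c ∘ eqhom p
  = wtens (wbraid a c) (idm (word b)) ∘ eqhom r ∘ wtens (idm (word a)) (wbraid b c).
Proof.
  unfold wbraid, wtens.
  rewrite (br_transport (word_app SB a b) eq_refl), (br_tens_l (word a) (word b) (word c)).
  rewrite tm_comp3_r, tm_comp3_l, !tm_eqhom_id, !tm_id_eqhom.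
  strictify; eqhom_norm; eqhom_close.
Qed.

Lemma wbraid_inv_hexagon1 (a b c : list B)
  (p : word (b ++ (c ++ a)) = word ((b ++ c) ++ a))
  (r : word (b ++ (a ++ c)) = word ((b ++ a) ++ c))
  (q : word (a ++ (b ++ c)) = word ((a ++ b) ++ c)) :
  eqhom q ∘ wbraid_inv a (b ++ c) ∘ eqhom p
  = wtens (wbraid_inv a b) (idm (word c)) ∘ eqhom r ∘ wtens (idm (word b)) (wbraid_inv a c).
Proof.
  apply (inverse_unique (f := eqhom (eq_sym p) ∘ wbraid a (b ++ c) ∘ eqhom (eq_sym q))).
  - eqhom_norm.
    now rewrite <- comp_assoc with (f := wbraid a (b ++ c)), wbraid_inv_wbraid; eqhom_norm.
  - rewrite (wbraid_hexagon1 _ (eq_sym r)), !comp_assoc.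
    rewrite <- (comp_assoc _ (wtens (wbraid a b) (idm (word c)))).
    rewrite <- wtens_comp, wbraid_wbraid_inv, comp_idl, wtens_id; eqhom_norm.
    now rewrite <- wtens_comp, wbraid_wbraid_inv, comp_idl, wtens_id.
Qed.

Lemma wbraid_inv_hexagon2 (a b c : list B)
  (p : word ((c ++ a) ++ b) = word (c ++ (a ++ b)))
  (r : word ((a ++ c) ++ b) = word (a ++ (c ++ b)))
  (q : word ((a ++ b) ++ c) = word (a ++ (b ++ c))) :
  eqhom q ∘ wbraid_inv (a ++ b) c ∘ eqhom p
  = wtens (idm (word a)) (wbraid_inv b c) ∘ eqhom r ∘ wtens (wbraid_inv a c) (idm (word b)).
Proof.
  apply (inverse_unique (f := eqhom (eq_sym p) ∘ wbraid (a ++ b) c ∘ eqhom (eq_sym q))).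
  - eqhom_norm.
    now rewrite <- comp_assoc with (f := wbraid (a ++ b) c), wbraid_inv_wbraid; eqhom_norm.
  - rewrite (wbraid_hexagon2 _ (eq_sym r)), !comp_assoc.
    rewrite <- (comp_assoc _ (wtens (idm (word a)) (wbraid b c))).
    rewrite <- wtens_comp, wbraid_wbraid_inv, comp_idl, wtens_id; eqhom_norm.
    now rewrite <- wtens_comp, wbraid_wbraid_inv, comp_idl, wtens_id.
Qed.

(* Braiding with the empty word is an idempotent (by a hexagon) split mono. *)
Lemma wbraid_single_nil (x : B) : wbraid [x] [] = idm x.
Proof.
  pose proof (@wbraid_hexagon1 [x] [] [] eq_refl eq_refl eq_refl) as H; simpl eqhom in H.
  rewrite comp_idl, comp_idr, comp_idr, (wtens_nil_l SB) in H.
  pose proof (wtens_nil_r SB (wbraid [x] []) (a := [x]) (b := [x]) eq_refl eq_refl) as H2.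
  simpl eqhom in H2; rewrite comp_idl, comp_idr in H2; cbn [app] in H, H2; rewrite H2 in H.
  exact (idempotent_split_mono_id (wbraid_inv_wbraid [x] []) H).
Qed.

Lemma wbraid_nil_single (x : B) : wbraid [] [x] = idm x.
Proof.
  pose proof (@wbraid_hexagon2 [] [] [x] eq_refl eq_refl eq_refl) as H; simpl eqhom in H.
  rewrite comp_idl, comp_idr, comp_idr, (wtens_nil_l SB) in H.
  pose proof (wtens_nil_r SB (wbraid [] [x]) (a := [x]) (b := [x]) eq_refl eq_refl) as H2.
  simpl eqhom in H2; rewrite comp_idl, comp_idr in H2; cbn [app] in H, H2; rewrite H2 in H.
  exact (idempotent_split_mono_id (wbraid_inv_wbraid [] [x]) H).
Qed.

Lemma wbraid_inv_single_nil (x : B) : wbraid_inv [x] [] = idm x.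
Proof.
  pose proof (wbraid_inv_wbraid [x] []) as E; cbn [app] in E.
  now rewrite wbraid_single_nil, comp_idr in E.
Qed.
Lemma wbraid_inv_nil_single (x : B) : wbraid_inv [] [x] = idm x.
Proof.
  pose proof (wbraid_inv_wbraid [] [x]) as E; cbn [app] in E.
  now rewrite wbraid_nil_single, comp_idr in E.
Qed.

Lemma app_assoc4 (a b c d : list B) : word ((a ++ b) ++ (c ++ d)) = word (a ++ ((b ++ c) ++ d)).
Proof. f_equal; now rewrite <- !app_assoc. Qed.

(* The middle-four interchange (a b)(c d) -> (a c)(b d), through the inverse
   braiding of [b] and [c] as in the multiplication of F ⊗ G, and its inverse. *)
Definition shuffle (a b c d : list B) : whom ((a ++ b) ++ (c ++ d)) ((a ++ c) ++ (b ++ d)) :=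
  eqhom (eq_sym (app_assoc4 a c b d))
  ∘ wtens (idm (word a)) (wtens (wbraid_inv c b) (idm (word d))) ∘ eqhom (app_assoc4 a b c d).
Definition unshuffle (a b c d : list B) : whom ((a ++ c) ++ (b ++ d)) ((a ++ b) ++ (c ++ d)) :=
  eqhom (eq_sym (app_assoc4 a b c d))
  ∘ wtens (idm (word a)) (wtens (wbraid c b) (idm (word d))) ∘ eqhom (app_assoc4 a c b d).

Lemma shuffle_nat {a a' b b' c c' d d' : list B}
  (f : whom a a') (g : whom b b') (h : whom c c') (k : whom d d') :
  shuffle a' b' c' d' ∘ wtens (wtens f g) (wtens h k)
  = wtens (wtens f h) (wtens g k) ∘ shuffle a b c d.
Proof.
  unfold shuffle, wtens, wbraid_inv; tm_transport; eqhom_norm.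
  rewrite (tm_assoc_l f g (tm h k)), (tm_assoc_r g h k), (tm_assoc_l f h (tm g k)),
    (tm_assoc_r h g k).
  tm_transport; strictify; tm_transport; eqhom_norm.
  rewrite !tm_comp_assoc_r, <- !tm_comp, !comp_idl, !comp_idr, bri_nat; eqhom_close.
Qed.

Lemma unshuffle_nat {a a' b b' c c' d d' : list B}
  (f : whom a a') (g : whom b b') (h : whom c c') (k : whom d d') :
  unshuffle a' b' c' d' ∘ wtens (wtens f h) (wtens g k)
  = wtens (wtens f g) (wtens h k) ∘ unshuffle a b c d.
Proof.
  unfold unshuffle, wtens, wbraid; tm_transport; eqhom_norm.
  rewrite (tm_assoc_l f h (tm g k)), (tm_assoc_r h g k), (tm_assoc_l f g (tm h k)),
    (tm_assoc_r g h k).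
  tm_transport; strictify; tm_transport; eqhom_norm.
  rewrite !tm_comp_assoc_r, <- !tm_comp, !comp_idl, !comp_idr, br_nat; eqhom_close.
Qed.

Lemma unshuffle_shuffle (a b c d : list B) : unshuffle a b c d ∘ shuffle a b c d = idm _.
Proof.
  unfold unshuffle, shuffle; eqhom_norm.
  rewrite (wtens_comp_assoc_r SB), <- (wtens_comp SB), wbraid_wbraid_inv, !comp_idl, !(wtens_id SB).
  now eqhom_norm.
Qed.
Lemma shuffle_unshuffle (a b c d : list B) : shuffle a b c d ∘ unshuffle a b c d = idm _.
Proof.
  unfold unshuffle, shuffle; eqhom_norm.
  rewrite (wtens_comp_assoc_r SB), <- (wtens_comp SB), wbraid_inv_wbraid, !comp_idl, !(wtens_id SB).
  now eqhom_norm.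
Qed.

(* The interchange is associative; this is where the hexagon axioms enter. *)
Lemma shuffle_assoc (a b c d e f : B) :
  shuffle [a; c] [b; d] [e] [f] ∘ wtens (shuffle [a] [b] [c] [d]) (idm (word [e; f]))
  = shuffle [a] [b] [c; e] [d; f] ∘ wtens (idm (word [a; b])) (shuffle [c] [d] [e] [f]).
Proof.
  unfold shuffle; cbn [app]; eqhom_norm.
  rw_refl (@wbraid_inv_hexagon1 [e] [b] [d]); rw_refl (@wbraid_inv_hexagon2 [c] [e] [b]).
  rewrite !(wtens_comp_id SB), !(wtens_id_comp SB).
  rw_refl (wtens_assoc SB (wbraid_inv [e] [b]) (idm (word [d])) (idm (word [f]))).
  rw_refl (wtens_assoc SB (idm (word [b])) (wbraid_inv [e] [d]) (idm (word [f]))).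
  rw_refl_rev (wtens_assoc SB (idm (word [a; c])) (idm (word [b]))
                 (wtens (wbraid_inv [e] [d]) (idm (word [f])))).
  rw_refl (wtens_assoc SB (idm (word [a])) (wtens (wbraid_inv [c] [b]) (idm (word [d])))
             (idm (word [e; f]))).
  rw_refl (wtens_assoc SB (wbraid_inv [c] [b]) (idm (word [d])) (idm (word [e; f]))).
  rw_refl (wtens_assoc SB (idm (word [c])) (wbraid_inv [e] [b]) (idm (word [d; f]))).
  rw_refl_rev (wtens_assoc SB (idm (word [a])) (idm (word [c]))
                 (wtens (wbraid_inv [e] [b]) (idm (word [d; f])))).
  rw_refl (wtens_assoc SB (wbraid_inv [c] [b]) (idm (word [e])) (idm (word [d; f]))).
  rw_refl_rev (wtens_assoc SB (idm (word [a; b])) (idm (word [c]))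
                 (wtens (wbraid_inv [e] [d]) (idm (word [f])))).
  rewrite !(wtens_id SB); cbn [app].
  rw_refl_rev (wtens_assoc SB (idm (word [a])) (wbraid_inv [c] [b]) (idm (word [d; e; f]))).
  rw_refl_rev (wtens_assoc SB (idm (word [a])) (wbraid_inv [c] [b]) (idm (word [e; d; f]))).
  rewrite <- !comp_assoc; repeat wtens_merge; reflexivity.
Qed.

Lemma shuffle_assoc_rotate_l (a b c d e f : B) :
  unshuffle [a] [b] [c; e] [d; f] ∘ shuffle [a; c] [b; d] [e] [f]
  = wtens (idm (word [a; b])) (shuffle [c] [d] [e] [f])
    ∘ wtens (unshuffle [a] [b] [c] [d]) (idm (word [e; f])).
Proof.
  apply (square_rotate_l (shuffle_assoc a b c d e f)).
  - exact (unshuffle_shuffle [a] [b] [c; e] [d; f]).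
  - exact (wtens_retraction_id SB (c := [e; f]) (shuffle_unshuffle [a] [b] [c] [d])).
Qed.

Lemma shuffle_assoc_rotate_r (a b c d e f : B) :
  unshuffle [a; c] [b; d] [e] [f] ∘ shuffle [a] [b] [c; e] [d; f]
  = wtens (shuffle [a] [b] [c] [d]) (idm (word [e; f]))
    ∘ wtens (idm (word [a; b])) (unshuffle [c] [d] [e] [f]).
Proof.
  apply (square_rotate_r (shuffle_assoc a b c d e f)).
  - exact (unshuffle_shuffle [a; c] [b; d] [e] [f]).
  - exact (wtens_id_retraction SB (c := [a; b]) (shuffle_unshuffle [c] [d] [e] [f])).
Qed.

Lemma unshuffle_assoc (a b c d e f : B) :
  wtens (unshuffle [a] [b] [c] [d]) (idm (word [e; f])) ∘ unshuffle [a; c] [b; d] [e] [f]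
  = wtens (idm (word [a; b])) (unshuffle [c] [d] [e] [f]) ∘ unshuffle [a] [b] [c; e] [d; f].
Proof.
  apply (square_inverse (shuffle_assoc a b c d e f)).
  - exact (wtens_retraction_id SB (c := [e; f]) (unshuffle_shuffle [a] [b] [c] [d])).
  - exact (unshuffle_shuffle [a; c] [b; d] [e] [f]).
  - exact (wtens_id_retraction SB (c := [a; b]) (shuffle_unshuffle [c] [d] [e] [f])).
  - exact (shuffle_unshuffle [a] [b] [c; e] [d; f]).
Qed.

Lemma shuffle_nil_l (x y : B) : shuffle [] [] [x] [y] = idm (word [x; y]).
Proof.
  unfold shuffle; cbn [app]; eqhom_norm.
  rewrite (wtens_nil_l SB), wbraid_inv_single_nil; apply (wtens_id SB [x] [y]).
Qed.
Lemma shuffle_nil_r (x y : B) : shuffle [x] [y] [] [] = idm (word [x; y]).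
Proof.
  unfold shuffle; cbn [app]; eqhom_norm; rewrite wbraid_inv_nil_single.
  change (wtens (idm (word [x])) (wtens (idm (word [y])) (idm (word []))) = idm (word [x; y])).
  rw_refl (wtens_id SB [y] []); apply (wtens_id SB [x] [y]).
Qed.
Lemma unshuffle_nil_l (x y : B) : unshuffle [] [] [x] [y] = idm (word [x; y]).
Proof.
  unfold unshuffle; cbn [app]; eqhom_norm.
  rewrite (wtens_nil_l SB), wbraid_single_nil; apply (wtens_id SB [x] [y]).
Qed.
Lemma unshuffle_nil_r (x y : B) : unshuffle [x] [y] [] [] = idm (word [x; y]).
Proof.
  unfold unshuffle; cbn [app]; eqhom_norm; rewrite wbraid_nil_single.
  change (wtens (idm (word [x])) (wtens (idm (word [y])) (idm (word []))) = idm (word [x; y])).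
  rw_refl (wtens_id SB [y] []); apply (wtens_id SB [x] [y]).
Qed.
End WordBraiding.

Ltac unfold_words := unfold w11, w21, w12, w01, w10, wtens; cbn [word app]; eqhom_norm.

Section FrobeniusWordLaws.
Variables (A B : MonCat).
Hypothesis SB : IsStrict (mc_data B).
Variable F : FunData A B.
Hypothesis HF : IsFrob F.
Local Notation wtens := (wtens SB).
Local Notation word := (@word B).

Lemma wfr_nat (X X' Y Y' : A) (f : hom X X') (g : hom Y Y') :
  w21 (fr F X' Y') ∘ wtens (w11 (fmap F f)) (w11 (fmap F g))
  = w11 (fmap F (tm f g)) ∘ w21 (fr F X Y).
Proof. unfold_words; rewrite (fr_nat HF); now eqhom_norm. Qed.

Lemma wfr_assoc (X Y Z : A) :
  w11 (fmap F (al X Y Z)) ∘ w21 (fr F (tn X Y) Z) ∘ wtens (w21 (fr F X Y)) (idm (word [F Z]))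
  = w21 (fr F X (tn Y Z)) ∘ wtens (idm (word [F X])) (w21 (fr F Y Z)).
Proof. unfold_words; rewrite (fr_assoc HF), (al_eqhom SB); eqhom_norm; eqhom_close. Qed.

Lemma wfr_lunit (X : A) :
  w11 (fmap F (la X)) ∘ w21 (fr F (un A) X) ∘ wtens (w01 (fr0 F)) (idm (word [F X]))
  = idm (word [F X]).
Proof. unfold_words; rewrite (fr_lunit HF), (la_eqhom SB); now eqhom_norm. Qed.

Lemma wfr_runit (X : A) :
  w11 (fmap F (ro X)) ∘ w21 (fr F X (un A)) ∘ wtens (idm (word [F X])) (w01 (fr0 F))
  = idm (word [F X]).
Proof. unfold_words; rewrite (fr_runit HF), (ro_eqhom SB); now eqhom_norm. Qed.

Lemma wfi_nat (X X' Y Y' : A) (f : hom X X') (g : hom Y Y') :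
  wtens (w11 (fmap F f)) (w11 (fmap F g)) ∘ w12 (fi F X Y)
  = w12 (fi F X' Y') ∘ w11 (fmap F (tm f g)).
Proof. unfold_words; now rewrite (fi_nat HF). Qed.

Lemma wfi_coassoc (X Y Z : A) :
  wtens (w12 (fi F X Y)) (idm (word [F Z])) ∘ w12 (fi F (tn X Y) Z)
  = wtens (idm (word [F X])) (w12 (fi F Y Z)) ∘ w12 (fi F X (tn Y Z)) ∘ w11 (fmap F (al X Y Z)).
Proof.
  unfold_words; pose proof (fi_coassoc HF X Y Z) as H; rewrite (al_eqhom SB) in H.
  rewrite <- H; eqhom_norm; eqhom_close.
Qed.

Lemma wfi_lcounit (X : A) :
  wtens (w10 (fi0 F)) (idm (word [F X])) ∘ w12 (fi F (un A) X) = w11 (fmap F (la X)).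
Proof. unfold_words; rewrite <- (fi_lcounit HF), (la_eqhom SB); eqhom_norm; eqhom_close. Qed.

Lemma wfi_rcounit (X : A) :
  wtens (idm (word [F X])) (w10 (fi0 F)) ∘ w12 (fi F X (un A)) = w11 (fmap F (ro X)).
Proof. unfold_words; rewrite <- (fi_rcounit HF), (ro_eqhom SB); eqhom_norm; eqhom_close. Qed.

Lemma wfrob1 (X Y Z : A) :
  w12 (fi F X (tn Y Z)) ∘ w11 (fmap F (al X Y Z)) ∘ w21 (fr F (tn X Y) Z)
  = wtens (idm (word [F X])) (w21 (fr F Y Z)) ∘ wtens (w12 (fi F X Y)) (idm (word [F Z])).
Proof. unfold_words; rewrite (frob1 HF), (al_eqhom SB); eqhom_norm; eqhom_close. Qed.

Lemma wfrob2 (X Y Z : A) :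
  w12 (fi F (tn X Y) Z) ∘ w11 (fmap F (ali X Y Z)) ∘ w21 (fr F X (tn Y Z))
  = wtens (w21 (fr F X Y)) (idm (word [F Z])) ∘ wtens (idm (word [F X])) (w12 (fi F Y Z)).
Proof. unfold_words; rewrite (frob2 HF), (ali_eqhom SB); eqhom_norm; eqhom_close. Qed.
End FrobeniusWordLaws.

Ltac unfold_shuffles :=
  unfold shuffle, unshuffle, wtens, wbraid, wbraid_inv, w11, w21, w12, w01, w10; cbn [word app].
Ltac rw_ptens t := let H := fresh in
  pose proof t as H; cbn [word fob ptens] in H; cbn [word fob ptens]; rewrite H; clear H.

Section PointwiseTensor.
Variable A : MonCat.
Variable B : BraidedMonCat.
Hypothesis SB : IsStrict (mc_data B).
Variables F G : FunData A B.
Hypothesis HF : IsFrob F.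
Hypothesis HG : IsFrob G.
Local Notation wtens := (wtens SB).
Local Notation shuffle := (shuffle SB).
Local Notation unshuffle := (unshuffle SB).
Local Notation word := (@word B).

Ltac componentwise lawF lawG := repeat first
  [ reflexivity | wtens_congr; [apply lawF | apply lawG] | apply comp_cong ].

Definition ptens_wr (X Y : A) : whom [F X; G X; F Y; G Y] [F (tn X Y); G (tn X Y)] :=
  wtens (w21 (fr F X Y)) (w21 (fr G X Y)) ∘ shuffle [F X] [G X] [F Y] [G Y].
Definition ptens_wi (X Y : A) : whom [F (tn X Y); G (tn X Y)] [F X; G X; F Y; G Y] :=
  unshuffle [F X] [G X] [F Y] [G Y] ∘ wtens (w12 (fi F X Y)) (w12 (fi G X Y)).
Definition ptens_wr0 : whom [] [F (un A); G (un A)] := wtens (w01 (fr0 F)) (w01 (fr0 G)).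
Definition ptens_wi0 : whom [F (un A); G (un A)] [] := wtens (w10 (fi0 F)) (w10 (fi0 G)).
Definition ptens_wmap {X Y : A} (f : hom X Y) : whom [F X; G X] [F Y; G Y] :=
  wtens (w11 (fmap F f)) (w11 (fmap G f)).

Lemma ptens_wfr_nat (X X' Y Y' : A) (f : hom X X') (g : hom Y Y') :
  ptens_wr X' Y' ∘ wtens (ptens_wmap f) (ptens_wmap g) = ptens_wmap (tm f g) ∘ ptens_wr X Y.
Proof.
  unfold ptens_wr, ptens_wmap; rewrite <- comp_assoc.
  rw_refl (shuffle_nat SB (w11 (fmap F f)) (w11 (fmap G f)) (w11 (fmap F g)) (w11 (fmap G g))).
  rewrite comp_assoc; wtens_merge; rewrite comp_assoc; wtens_merge.
  componentwise (wfr_nat SB HF) (wfr_nat SB HG).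
Qed.

Lemma ptens_wfr_assoc (X Y Z : A) :
  ptens_wmap (al X Y Z) ∘ ptens_wr (tn X Y) Z ∘ wtens (ptens_wr X Y) (idm (word [F Z; G Z]))
  = ptens_wr X (tn Y Z) ∘ wtens (idm (word [F X; G X])) (ptens_wr Y Z).
Proof.
  unfold ptens_wr, ptens_wmap; cbn [app]; rewrite wtens_comp_id, wtens_id_comp.
  rw_refl_rev (wtens_id SB [F Z] [G Z]).
  rw_refl_rev (wtens_id SB [F X] [G X]).
  repeat rewrite comp_assoc.
  rw_chain (shuffle_nat SB (w21 (fr F X Y)) (w21 (fr G X Y))
    (idm (word [F Z])) (idm (word [G Z]))).
  rw_chain (shuffle_nat SB (idm (word [F X])) (idm (word [G X]))
    (w21 (fr F Y Z)) (w21 (fr G Y Z))).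
  rw_refl (wtens_id SB [F Z] [G Z]).
  rw_refl (wtens_id SB [F X] [G X]).
  rw_chain (shuffle_assoc SB (F X) (G X) (F Y) (G Y) (F Z) (G Z)).
  repeat rewrite comp_assoc; repeat wtens_merge.
  componentwise (wfr_assoc SB HF) (wfr_assoc SB HG).
Qed.

Lemma ptens_wfr_lunit (X : A) :
  ptens_wmap (la X) ∘ ptens_wr (un A) X ∘ wtens ptens_wr0 (idm (word [F X; G X]))
  = idm (word [F X; G X]).
Proof.
  unfold ptens_wr, ptens_wmap, ptens_wr0; rw_refl_rev (wtens_id SB [F X] [G X]).
  rw_chain (shuffle_nat SB (w01 (fr0 F)) (w01 (fr0 G))
    (idm (word [F X])) (idm (word [G X]))).
  rewrite (shuffle_nil_l SB), comp_idr; repeat wtens_merge.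
  componentwise (wfr_lunit SB HF) (wfr_lunit SB HG).
Qed.

Lemma ptens_wfr_runit (X : A) :
  ptens_wmap (ro X) ∘ ptens_wr X (un A) ∘ wtens (idm (word [F X; G X])) ptens_wr0
  = idm (word [F X; G X]).
Proof.
  unfold ptens_wr, ptens_wmap, ptens_wr0; rw_refl_rev (wtens_id SB [F X] [G X]).
  rw_chain (shuffle_nat SB (idm (word [F X])) (idm (word [G X]))
    (w01 (fr0 F)) (w01 (fr0 G))).
  rewrite (shuffle_nil_r SB), comp_idr; repeat wtens_merge.
  componentwise (wfr_runit SB HF) (wfr_runit SB HG).
Qed.

Lemma ptens_wfi_nat (X X' Y Y' : A) (f : hom X X') (g : hom Y Y') :
  wtens (ptens_wmap f) (ptens_wmap g) ∘ ptens_wi X Y = ptens_wi X' Y' ∘ ptens_wmap (tm f g).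
Proof.
  unfold ptens_wi, ptens_wmap.
  rw_chain_rev (unshuffle_nat SB (w11 (fmap F f)) (w11 (fmap G f))
    (w11 (fmap F g)) (w11 (fmap G g))).
  repeat rewrite comp_assoc; repeat wtens_merge; repeat rewrite <- comp_assoc.
  componentwise (wfi_nat SB HF) (wfi_nat SB HG).
Qed.

Lemma ptens_wfi_coassoc (X Y Z : A) :
  wtens (ptens_wi X Y) (idm (word [F Z; G Z])) ∘ ptens_wi (tn X Y) Z
  = wtens (idm (word [F X; G X])) (ptens_wi Y Z) ∘ ptens_wi X (tn Y Z) ∘ ptens_wmap (al X Y Z).
Proof.
  unfold ptens_wi, ptens_wmap; cbn [app]; rewrite wtens_comp_id, wtens_id_comp.
  rw_refl_rev (wtens_id SB [F Z] [G Z]).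
  rw_refl_rev (wtens_id SB [F X] [G X]).
  rw_chain_rev (unshuffle_nat SB (w12 (fi F X Y)) (w12 (fi G X Y))
    (idm (word [F Z])) (idm (word [G Z]))).
  rw_chain_rev (unshuffle_nat SB (idm (word [F X])) (idm (word [G X]))
    (w12 (fi F Y Z)) (w12 (fi G Y Z))).
  rw_refl (wtens_id SB [F Z] [G Z]).
  rw_refl (wtens_id SB [F X] [G X]).
  rw_chain (unshuffle_assoc SB (F X) (G X) (F Y) (G Y) (F Z) (G Z)).
  repeat rewrite comp_assoc; repeat wtens_merge; repeat rewrite comp_assoc.
  componentwise (wfi_coassoc SB HF) (wfi_coassoc SB HG).
Qed.

Lemma ptens_wfi_lcounit (X : A) :
  wtens ptens_wi0 (idm (word [F X; G X])) ∘ ptens_wi (un A) X = ptens_wmap (la X).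
Proof.
  unfold ptens_wi, ptens_wmap, ptens_wi0; rw_refl_rev (wtens_id SB [F X] [G X]).
  rw_chain_rev (unshuffle_nat SB (w10 (fi0 F)) (w10 (fi0 G))
    (idm (word [F X])) (idm (word [G X]))).
  rewrite (unshuffle_nil_l SB), comp_idl; repeat wtens_merge.
  componentwise (wfi_lcounit SB HF) (wfi_lcounit SB HG).
Qed.

Lemma ptens_wfi_rcounit (X : A) :
  wtens (idm (word [F X; G X])) ptens_wi0 ∘ ptens_wi X (un A) = ptens_wmap (ro X).
Proof.
  unfold ptens_wi, ptens_wmap, ptens_wi0; rw_refl_rev (wtens_id SB [F X] [G X]).
  rw_chain_rev (unshuffle_nat SB (idm (word [F X])) (idm (word [G X]))
    (w10 (fi0 F)) (w10 (fi0 G))).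
  rewrite (unshuffle_nil_r SB), comp_idl; repeat wtens_merge.
  componentwise (wfi_rcounit SB HF) (wfi_rcounit SB HG).
Qed.

Lemma ptens_wfrob1 (X Y Z : A) :
  ptens_wi X (tn Y Z) ∘ ptens_wmap (al X Y Z) ∘ ptens_wr (tn X Y) Z
  = wtens (idm (word [F X; G X])) (ptens_wr Y Z) ∘ wtens (ptens_wi X Y) (idm (word [F Z; G Z])).
Proof.
  unfold ptens_wi, ptens_wr, ptens_wmap; cbn [app]; rewrite wtens_comp_id, wtens_id_comp.
  rw_chain_rev (shuffle_assoc_rotate_l SB (F X) (G X) (F Y) (G Y) (F Z) (G Z)).
  rw_refl_rev (wtens_id SB [F Z] [G Z]).
  rw_refl_rev (wtens_id SB [F X] [G X]).
  rw_chain_rev (unshuffle_nat SB (idm (word [F X])) (idm (word [G X]))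
    (w21 (fr F Y Z)) (w21 (fr G Y Z))).
  rw_chain (shuffle_nat SB (w12 (fi F X Y)) (w12 (fi G X Y))
    (idm (word [F Z])) (idm (word [G Z]))).
  repeat rewrite comp_assoc; repeat wtens_merge; repeat rewrite comp_assoc.
  componentwise (wfrob1 SB HF) (wfrob1 SB HG).
Qed.

Lemma ptens_wfrob2 (X Y Z : A) :
  ptens_wi (tn X Y) Z ∘ ptens_wmap (ali X Y Z) ∘ ptens_wr X (tn Y Z)
  = wtens (ptens_wr X Y) (idm (word [F Z; G Z])) ∘ wtens (idm (word [F X; G X])) (ptens_wi Y Z).
Proof.
  unfold ptens_wi, ptens_wr, ptens_wmap; cbn [app]; rewrite wtens_comp_id, wtens_id_comp.
  rw_chain_rev (shuffle_assoc_rotate_r SB (F X) (G X) (F Y) (G Y) (F Z) (G Z)).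
  rw_refl_rev (wtens_id SB [F Z] [G Z]).
  rw_refl_rev (wtens_id SB [F X] [G X]).
  rw_chain_rev (unshuffle_nat SB (w21 (fr F X Y)) (w21 (fr G X Y))
    (idm (word [F Z])) (idm (word [G Z]))).
  rw_chain (shuffle_nat SB (idm (word [F X])) (idm (word [G X]))
    (w12 (fi F Y Z)) (w12 (fi G Y Z))).
  repeat rewrite comp_assoc; repeat wtens_merge; repeat rewrite comp_assoc.
  componentwise (wfrob2 SB HF) (wfrob2 SB HG).
Qed.

Local Notation P := (ptens F G).

Lemma ptens_fr_word (X Y : A) :
  fr P X Y = ptens_wr X Y ∘ eqhom (word_app SB [F X; G X] [F Y; G Y]).
Proof.
  cbn [fr ptens]; unfold ptens_r, ptens_wr; unfold_shuffles.
  rewrite !(al_eqhom SB), !(ali_eqhom SB); tm_transport; eqhom_norm; eqhom_close.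
Qed.

Lemma ptens_fi_word (X Y : A) :
  fi P X Y = eqhom (eq_sym (word_app SB [F X; G X] [F Y; G Y])) ∘ ptens_wi X Y.
Proof.
  cbn [fi ptens]; unfold ptens_i, ptens_wi; unfold_shuffles.
  rewrite !(al_eqhom SB), !(ali_eqhom SB); tm_transport; eqhom_norm; eqhom_close.
Qed.
Lemma ptens_fr0_word : fr0 P = ptens_wr0.
Proof.
  cbn [fr0 ptens]; unfold ptens_wr0; unfold_shuffles.
  rewrite (lai_eqhom SB); eqhom_norm; eqhom_close.
Qed.
Lemma ptens_fi0_word : fi0 P = ptens_wi0.
Proof.
  cbn [fi0 ptens]; unfold ptens_wi0; unfold_shuffles.
  rewrite (la_eqhom SB); eqhom_norm; eqhom_close.
Qed.
Lemma ptens_fmap_word (X Y : A) (f : hom X Y) : fmap P f = ptens_wmap f.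
Proof.
  cbn [fmap ptens]; unfold ptens_wmap; unfold_shuffles; eqhom_norm; reflexivity.
Qed.

Lemma ptens_fr_assoc (X Y Z : A) :
  fmap P (al X Y Z) ∘ fr P (tn X Y) Z ∘ tm (fr P X Y) (idm (P Z))
  = fr P X (tn Y Z) ∘ tm (idm (P X)) (fr P Y Z) ∘ al (P X) (P Y) (P Z).
Proof.
  rewrite ptens_fmap_word, !ptens_fr_word.
  change (idm (fob P Z)) with (idm (word [F Z; G Z])).
  change (idm (fob P X)) with (idm (word [F X; G X])).
  rewrite tm_comp_id, tm_id_comp, tm_eqhom_id, tm_id_eqhom.
  rewrite (tm_wtens SB (ptens_wr X Y) (idm (word [F Z; G Z]))),
    (tm_wtens SB (idm (word [F X; G X])) (ptens_wr Y Z)).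
  rewrite (al_eqhom SB); eqhom_norm.
  apply comp_cong; [apply ptens_wfr_assoc | apply eqhom_irrel].
Qed.

Lemma ptens_fr_nat (X X' Y Y' : A) (f : hom X X') (g : hom Y Y') :
  fr P X' Y' ∘ tm (fmap P f) (fmap P g) = fmap P (tm f g) ∘ fr P X Y.
Proof.
  rewrite !ptens_fmap_word, !ptens_fr_word.
  rw_ptens (tm_wtens SB (ptens_wmap f) (ptens_wmap g)); eqhom_norm.
  apply comp_cong; [apply ptens_wfr_nat | apply eqhom_irrel].
Qed.

Lemma ptens_fr_lunit (X : A) :
  fmap P (la X) ∘ fr P (un A) X ∘ tm (fr0 P) (idm (P X)) = la (P X).
Proof.
  rewrite ptens_fmap_word, ptens_fr_word, ptens_fr0_word.
  change (idm (fob P X)) with (idm (word [F X; G X])).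
  rw_ptens (tm_wtens SB ptens_wr0 (idm (word [F X; G X]))); rewrite (la_eqhom SB); eqhom_norm.
  apply comp_eqhom_of_id; apply ptens_wfr_lunit.
Qed.

Lemma ptens_fr_runit (X : A) :
  fmap P (ro X) ∘ fr P X (un A) ∘ tm (idm (P X)) (fr0 P) = ro (P X).
Proof.
  rewrite ptens_fmap_word, ptens_fr_word, ptens_fr0_word.
  change (idm (fob P X)) with (idm (word [F X; G X])).
  rw_ptens (tm_wtens SB (idm (word [F X; G X])) ptens_wr0); rewrite (ro_eqhom SB); eqhom_norm.
  apply comp_eqhom_of_id; apply ptens_wfr_runit.
Qed.

Lemma ptens_fi_nat (X X' Y Y' : A) (f : hom X X') (g : hom Y Y') :
  tm (fmap P f) (fmap P g) ∘ fi P X Y = fi P X' Y' ∘ fmap P (tm f g).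
Proof.
  rewrite !ptens_fmap_word, !ptens_fi_word.
  rw_ptens (tm_wtens SB (ptens_wmap f) (ptens_wmap g)); eqhom_norm.
  repeat rewrite <- comp_assoc; apply eqhom_comp_cong; repeat rewrite comp_assoc.
  apply ptens_wfi_nat.
Qed.

Lemma ptens_fi_coassoc (X Y Z : A) :
  al (P X) (P Y) (P Z) ∘ tm (fi P X Y) (idm (P Z)) ∘ fi P (tn X Y) Z
  = tm (idm (P X)) (fi P Y Z) ∘ fi P X (tn Y Z) ∘ fmap P (al X Y Z).
Proof.
  rewrite ptens_fmap_word, !ptens_fi_word.
  change (idm (fob P Z)) with (idm (word [F Z; G Z])).
  change (idm (fob P X)) with (idm (word [F X; G X])).
  rewrite tm_comp_id, tm_id_comp, tm_eqhom_id, tm_id_eqhom; cbn [app].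
  rewrite (tm_wtens SB (ptens_wi X Y) (idm (word [F Z; G Z]))),
    (tm_wtens SB (idm (word [F X; G X])) (ptens_wi Y Z)).
  rewrite (al_eqhom SB); eqhom_norm.
  repeat rewrite <- comp_assoc; apply eqhom_comp_cong; repeat rewrite comp_assoc.
  apply ptens_wfi_coassoc.
Qed.

Lemma ptens_fi_lcounit (X : A) :
  la (P X) ∘ tm (fi0 P) (idm (P X)) ∘ fi P (un A) X = fmap P (la X).
Proof.
  rewrite ptens_fmap_word, ptens_fi_word, ptens_fi0_word.
  change (idm (fob P X)) with (idm (word [F X; G X])).
  rw_ptens (tm_wtens SB ptens_wi0 (idm (word [F X; G X]))); rewrite (la_eqhom SB); eqhom_norm.
  apply ptens_wfi_lcounit.
Qed.

Lemma ptens_fi_rcounit (X : A) :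
  ro (P X) ∘ tm (idm (P X)) (fi0 P) ∘ fi P X (un A) = fmap P (ro X).
Proof.
  rewrite ptens_fmap_word, ptens_fi_word, ptens_fi0_word.
  change (idm (fob P X)) with (idm (word [F X; G X])).
  rw_ptens (tm_wtens SB (idm (word [F X; G X])) ptens_wi0); rewrite (ro_eqhom SB); eqhom_norm.
  apply ptens_wfi_rcounit.
Qed.

Lemma ptens_frob1 (X Y Z : A) :
  fi P X (tn Y Z) ∘ fmap P (al X Y Z) ∘ fr P (tn X Y) Z
  = tm (idm (P X)) (fr P Y Z) ∘ al (P X) (P Y) (P Z) ∘ tm (fi P X Y) (idm (P Z)).
Proof.
  rewrite ptens_fmap_word, !ptens_fi_word, !ptens_fr_word.
  change (idm (fob P Z)) with (idm (word [F Z; G Z])).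
  change (idm (fob P X)) with (idm (word [F X; G X])).
  rewrite tm_comp_id, tm_id_comp, tm_eqhom_id, tm_id_eqhom; cbn [app].
  rewrite (tm_wtens SB (ptens_wi X Y) (idm (word [F Z; G Z]))),
    (tm_wtens SB (idm (word [F X; G X])) (ptens_wr Y Z)).
  rewrite (al_eqhom SB); eqhom_norm.
  repeat rewrite <- comp_assoc; apply eqhom_comp_cong; repeat rewrite comp_assoc.
  apply comp_cong; [apply ptens_wfrob1 | apply eqhom_irrel].
Qed.

Lemma ptens_frob2 (X Y Z : A) :
  fi P (tn X Y) Z ∘ fmap P (ali X Y Z) ∘ fr P X (tn Y Z)
  = tm (fr P X Y) (idm (P Z)) ∘ ali (P X) (P Y) (P Z) ∘ tm (idm (P X)) (fi P Y Z).
Proof.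
  rewrite ptens_fmap_word, !ptens_fi_word, !ptens_fr_word.
  change (idm (fob P Z)) with (idm (word [F Z; G Z])).
  change (idm (fob P X)) with (idm (word [F X; G X])).
  rewrite tm_comp_id, tm_id_comp, tm_eqhom_id, tm_id_eqhom; cbn [app].
  rewrite (tm_wtens SB (ptens_wr X Y) (idm (word [F Z; G Z]))),
    (tm_wtens SB (idm (word [F X; G X])) (ptens_wi Y Z)).
  rewrite (ali_eqhom SB); eqhom_norm.
  repeat rewrite <- comp_assoc; apply eqhom_comp_cong; repeat rewrite comp_assoc.
  apply comp_cong; [apply ptens_wfrob2 | apply eqhom_irrel].
Qed.

Lemma ptens_frob : IsFrob P.
Proof.
  constructor.
  - intros X; cbn [fmap ptens]; rewrite (fmap_id HF), (fmap_id HG); apply (tm_id (M := B)).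
  - intros X Y Z g f; cbn [fmap ptens]; rewrite (fmap_comp HF), (fmap_comp HG).
    apply (tm_comp (M := B)).
  - apply ptens_fr_nat.
  - apply ptens_fr_assoc.
  - apply ptens_fr_lunit.
  - apply ptens_fr_runit.
  - apply ptens_fi_nat.
  - apply ptens_fi_coassoc.
  - apply ptens_fi_lcounit.
  - apply ptens_fi_rcounit.
  - apply ptens_frob1.
  - apply ptens_frob2.
Qed.

End PointwiseTensor.

Lemma const_unit_frob (A B : MonCat) (SB : IsStrict (mc_data B)) : IsFrob (const_unit A B).
Proof.
  constructor; intros; try (cbn [fmap const_unit]; now rewrite comp_idl);
    cbn [fmap fr fr0 fi fi0 const_unit fob];
    repeat first [ rewrite (al_eqhom SB) | rewrite (ali_eqhom SB) | rewrite (la_eqhom SB)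
                 | rewrite (lai_eqhom SB) | rewrite (ro_eqhom SB) | rewrite (roi_eqhom SB) ];
    tm_transport; eqhom_norm; eqhom_close.
Qed.

Section PointwiseStructure.
Variables (A : MonCat) (B : BraidedMonCat).
Let L := mc_laws B.
Let BL := bmc_laws B.

Lemma br_natural (F G : FunData A B) :
  is_natural (F := ptens F G) (G := ptens G F) (fun X => br (F X) (G X)).
Proof. intros X Y f; cbn [fmap ptens]; apply br_nat. Qed.
Lemma bri_natural (F G : FunData A B) :
  is_natural (F := ptens G F) (G := ptens F G) (fun X => bri (F X) (G X)).
Proof. intros X Y f; cbn [fmap ptens]; apply bri_nat. Qed.

Lemma tm_natural (F F' G G' : FunData A B) (t : NatTrans F F') (s : NatTrans G G') :
  is_natural (F := ptens F G) (G := ptens F' G') (fun X => tm (proj1_sig t X) (proj1_sig s X)).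
Proof.
  destruct t as [t Ht], s as [s Hs]; intros X Y f; cbn [fmap ptens proj1_sig].
  transitivity (tm (t Y ∘ fmap F f) (s Y ∘ fmap G f)); [symmetry; apply tm_comp |].
  rewrite Ht, Hs; apply tm_comp.
Qed.

Lemma al_natural (F G H : FunData A B) :
  is_natural (F := ptens (ptens F G) H) (G := ptens F (ptens G H))
    (fun X => al (F X) (G X) (H X)).
Proof. intros X Y f; cbn [fmap ptens]; apply (alpha_nat L). Qed.
Lemma ali_natural (F G H : FunData A B) :
  is_natural (F := ptens F (ptens G H)) (G := ptens (ptens F G) H)
    (fun X => ali (F X) (G X) (H X)).
Proof. intros X Y f; cbn [fmap ptens]; apply ali_nat. Qed.
Lemma la_natural (F : FunData A B) :
  is_natural (F := ptens (const_unit A B) F) (G := F) (fun X => la (F X)).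
Proof. intros X Y f; cbn [fmap ptens const_unit]; symmetry; apply (lambda_nat L). Qed.
Lemma lai_natural (F : FunData A B) :
  is_natural (F := F) (G := ptens (const_unit A B) F) (fun X => lai (F X)).
Proof. intros X Y f; cbn [fmap ptens const_unit]; apply lai_nat. Qed.
Lemma ro_natural (F : FunData A B) :
  is_natural (F := ptens F (const_unit A B)) (G := F) (fun X => ro (F X)).
Proof. intros X Y f; cbn [fmap ptens const_unit]; symmetry; apply (rho_nat L). Qed.
Lemma roi_natural (F : FunData A B) :
  is_natural (F := F) (G := ptens F (const_unit A B)) (fun X => roi (F X)).
Proof. intros X Y f; cbn [fmap ptens const_unit]; apply roi_nat. Qed.

(* The Frobenius property of the tensor and the unit enters only through
   these proofs, so the monoidal structure is built for arbitrary ones. *)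
Variable tens_frob : forall F G : FrobOb A B, IsFrob (ptens (proj1_sig F) (proj1_sig G)).
Variable unit_frob : IsFrob (const_unit A B).
Let T (F G : FrobOb A B) : FrobOb A B := exist _ _ (tens_frob F G).
Let U : FrobOb A B := exist _ _ unit_frob.

Definition frob_mon_data : @MonData (FrobCat A B) T U :=
  @Build_MonData (FrobCat A B) T U
    (fun F F' G G' t s =>
       exist _ _ (@tm_natural (proj1_sig F) (proj1_sig F') (proj1_sig G) (proj1_sig G') t s))
    (fun F G H => exist _ _ (al_natural (proj1_sig F) (proj1_sig G) (proj1_sig H)))
    (fun F G H => exist _ _ (ali_natural (proj1_sig F) (proj1_sig G) (proj1_sig H)))
    (fun F => exist _ _ (la_natural (proj1_sig F)))
    (fun F => exist _ _ (lai_natural (proj1_sig F)))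
    (fun F => exist _ _ (ro_natural (proj1_sig F)))
    (fun F => exist _ _ (roi_natural (proj1_sig F))).

Lemma frob_mon_laws : MonLaws frob_mon_data.
Proof.
  constructor; intros; apply nt_eq; intros; cbn.
  - apply tm_id.
  - apply tm_comp.
  - apply (alpha_iso1 L).
  - apply (alpha_iso2 L).
  - apply (alpha_nat L).
  - apply (lambda_iso1 L).
  - apply (lambda_iso2 L).
  - apply (lambda_nat L).
  - apply (rho_iso1 L).
  - apply (rho_iso2 L).
  - apply (rho_nat L).
  - apply (pentagon L).
  - apply (triangle L).
Qed.

Lemma frob_braid_laws :
  BraidLaws frob_mon_data (fun F G => exist _ _ (br_natural (proj1_sig F) (proj1_sig G)))
    (fun F G => exist _ _ (bri_natural (proj1_sig F) (proj1_sig G))).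
Proof.
  constructor; intros; apply nt_eq; intros; cbn.
  - apply (braid_iso1 BL).
  - apply (braid_iso2 BL).
  - apply (braid_nat BL).
  - apply (hexagon1 BL).
  - apply (hexagon2 BL).
Qed.
End PointwiseStructure.

Theorem mainTheorem5 (A : StrictMonCat) (B : StrictBraidedMonCat) :
  exists (Htens : forall F G : FrobOb A B, IsFrob (ptens (proj1_sig F) (proj1_sig G)))
         (Hunit : IsFrob (const_unit A B))
         (Hnat : forall F G : FrobOb A B,
             is_natural (F := ptens (proj1_sig F) (proj1_sig G))
                        (G := ptens (proj1_sig G) (proj1_sig F))
                        (fun X => br (proj1_sig F X) (proj1_sig G X))),
  exists (M : @MonData (FrobCat A B)
                (fun F G => exist _ (ptens (proj1_sig F) (proj1_sig G)) (Htens F G))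
                (exist _ (const_unit A B) Hunit))
         (cinv : forall F G : FrobOb A B,
             NatTrans (ptens (proj1_sig G) (proj1_sig F)) (ptens (proj1_sig F) (proj1_sig G))),
    MonLaws M /\
    BraidLaws M (fun F G => exist _ _ (Hnat F G)) cinv /\
    (forall (F F' G G' : FrobOb A B) (t : NatTrans (proj1_sig F) (proj1_sig F'))
            (s : NatTrans (proj1_sig G) (proj1_sig G')) (X : A),
        proj1_sig (tensm M (X := F) (X' := F') (Y := G) (Y' := G') t s) X
        = tm (proj1_sig t X) (proj1_sig s X)).
Proof.
  pose proof (sbmc_strict B) as SB.
  set (tens_frob := fun F G : FrobOb A B => ptens_frob SB (proj2_sig F) (proj2_sig G)).
  exists tens_frob, (const_unit_frob A SB).
  exists (fun F G => br_natural (proj1_sig F) (proj1_sig G)).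
  exists (frob_mon_data tens_frob (const_unit_frob A SB)).
  exists (fun F G => exist _ _ (bri_natural (proj1_sig F) (proj1_sig G))).
  split; [| split].
  - apply frob_mon_laws.
  - apply frob_braid_laws.
  - reflexivity.
Qed.
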